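(* Let $b_1,b_2,b_3\in\mathbb{R}$ with $b_1b_2b_3\neq 0$ and $b_2b_3<0$, and consider the system $$\dot x_1=b_1x_2,\qquad \dot x_2=b_2x_1x_3,\qquad \dot x_3=b_3x_1x_2 .$$ Let $H>0$ be a constant and set $\gamma=\sqrt{-b_3/b_2}$. Then the solution of this system restricted to the constant level surface $$x_2^2-\frac{b_2}{b_3}x_3^2=2H$$ is $$x_1(t)=\frac{\gamma}{b_3}\dot\theta(t),\qquad x_2(t)=\sqrt{2H}\cos\theta(t),\qquad x_3(t)=\gamma\sqrt{2H}\sin\theta(t),$$ where $\theta(t)$ is a solution of the pendulum equation $$\ddot\theta(t)=\frac{b_1b_3}{\gamma}\sqrt{2H}\cos\theta(t).$$ *)

From Stdlib Require Import Reals.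
From Coquelicot Require Import Coquelicot.
Open Scope R_scope.

Definition gamma (b2 b3 : R) : R := sqrt (- b3 / b2).

Definition is_solution (b1 b2 b3 : R) (x1 x2 x3 : R -> R) : Prop :=
  forall t : R,
    is_derive x1 t (b1 * x2 t) /\
    is_derive x2 t (b2 * x1 t * x3 t) /\
    is_derive x3 t (b3 * x1 t * x2 t).

Definition on_level (b2 b3 H : R) (x2 x3 : R -> R) : Prop :=
  forall t : R, x2 t ^ 2 - b2 / b3 * x3 t ^ 2 = 2 * H.

Definition is_pendulum_solution (b1 b2 b3 H : R) (theta dtheta : R -> R) : Prop :=
  forall t : R,
    is_derive theta t (dtheta t) /\
    is_derive dtheta t (b1 * b3 / gamma b2 b3 * sqrt (2 * H) * cos (theta t)).

(* Put [u = x2] and [v = x3 / gamma].  Since [b2 = - b3 / gamma^2], the system says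
   that [(u, v)] rotates with angular velocity [w = b3 x1 / gamma]:
   [u' = - w v] and [v' = w u].  Choosing [theta(0)] as the polar angle of
   [(u(0), v(0))] on the circle of radius [sqrt (2H)] given by the level surface and
   [theta' = w], the point [sqrt (2H) (cos theta, sin theta)] solves the same linear
   system with the same initial value, and the squared distance between two
   solutions of a rotation system is constant, hence zero.  Then
   [theta'' = b3 x1' / gamma = (b1 b3 / gamma) x2] is the pendulum equation. *)
From Stdlib Require Import Reals Lra Psatz.
From Coquelicot Require Import Coquelicot.
Open Scope R_scope.

Lemma is_derive_0_const (f : R -> R) :
  (forall t, is_derive f t 0) -> forall t, f t = f 0.
Proof.
intros hf t.
destruct (Rtotal_order t 0) as [lt | [-> | gt]]; [| reflexivity |].
- apply (eq_is_derive f t 0); [intros; apply hf | exact lt].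
- symmetry; apply (eq_is_derive f 0 t); [intros; apply hf | exact gt].
Qed.

Lemma is_derive_primitive (f : R -> R) (c : R) :
  (forall t, continuous f t) -> forall t, is_derive (fun t => c + RInt f 0 t) t (f t).
Proof.
intros hf t; rewrite <- (Rplus_0_l (f t)).
apply (is_derive_plus (fun _ => c) (fun t => RInt f 0 t)).
{ exact (is_derive_const (V := R_NormedModule) c t). }
apply (is_derive_RInt f _ 0); [| apply hf].
apply filter_forall; intro b.
apply (RInt_correct (V := R_CompleteNormedModule)).
apply ex_RInt_continuous; intros; apply hf.
Qed.

Lemma cos_sin_surjective (a b : R) :
  a ^ 2 + b ^ 2 = 1 -> exists p, cos p = a /\ sin p = b.
Proof.
intros hab.
assert (ha : -1 <= a <= 1) by nra.
assert (hsqrt : sqrt (1 - a²) = Rabs b).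
{ replace (1 - a²) with (b²) by (unfold Rsqr; nra). apply sqrt_Rsqr_abs. }
destruct (Rle_or_lt 0 b) as [hb | hb].
- exists (acos a); rewrite cos_acos, sin_acos, hsqrt, Rabs_pos_eq; auto.
- exists (- acos a); rewrite cos_neg, sin_neg, cos_acos, sin_acos, hsqrt, Rabs_left; auto.
  split; [reflexivity | ring].
Qed.

Ltac derive_solve :=
  auto_derive;
  [ repeat match goal with
    | |- _ /\ _ => split
    | |- True => exact I
    | h : is_derive ?f ?t _ |- ex_derive _ ?t => eexists; exact h
    end
  | repeat match goal with
    | h : is_derive ?f ?t ?df |- context [Derive (fun x => ?f x) ?t] =>
        replace (Derive (fun x => f x) t) with df
          by (symmetry; apply is_derive_unique; exact h)
    end ].

Definition is_rotation (w u v : R -> R) : Prop :=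
  forall t, is_derive u t (- w t * v t) /\ is_derive v t (w t * u t).

Lemma is_rotation_polar (w theta : R -> R) (r : R) :
  (forall t, is_derive theta t (w t)) ->
  is_rotation w (fun t => r * cos (theta t)) (fun t => r * sin (theta t)).
Proof.
intros htheta t; specialize (htheta t).
split; derive_solve; ring.
Qed.

Lemma is_rotation_unique (w u1 v1 u2 v2 : R -> R) :
  is_rotation w u1 v1 -> is_rotation w u2 v2 ->
  u1 0 = u2 0 -> v1 0 = v2 0 -> forall t, u1 t = u2 t /\ v1 t = v2 t.
Proof.
intros rot1 rot2 hu hv t.
set (dist := fun t => (u1 t - u2 t)² + (v1 t - v2 t)²).
assert (hdist : forall t, is_derive dist t 0).
{ intro u; destruct (rot1 u) as [hu1 hv1], (rot2 u) as [hu2 hv2].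
  unfold dist, Rsqr; derive_solve; ring. }
assert (hdist0 : dist t = 0).
{ rewrite (is_derive_0_const dist hdist t); unfold dist; rewrite hu, hv, !Rminus_diag.
  unfold Rsqr; ring. }
destruct (Rplus_sqr_eq_0 _ _ hdist0); split; lra.
Qed.

Section LevelSurface.

Variables b1 b2 b3 H : R.
Hypothesis hb23 : b2 * b3 < 0.
Hypothesis hH : 0 < H.

Let g := gamma b2 b3.
Let s := sqrt (2 * H).

Lemma gamma_sq_pos : 0 < - b3 / b2.
Proof.
replace (- b3 / b2) with (- (b2 * b3) / (b2 * b2)) by (field; nra).
apply Rdiv_lt_0_compat; nra.
Qed.

Lemma gamma_pos : 0 < g.
Proof. exact (sqrt_lt_R0 _ gamma_sq_pos). Qed.

Lemma b2_gamma : b2 = - b3 / (g * g).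
Proof.
unfold g, gamma; rewrite sqrt_sqrt; [| apply Rlt_le, gamma_sq_pos].
field; split; nra.
Qed.

Lemma b3_neq0 : b3 <> 0.
Proof. intros ->; lra. Qed.

Lemma sqrt_2H_pos : 0 < s.
Proof. apply sqrt_lt_R0; lra. Qed.

Lemma sqrt_2H_sq : s * s = 2 * H.
Proof. apply sqrt_sqrt; lra. Qed.

Lemma is_solution_rotation (x1 x2 x3 : R -> R) :
  is_solution b1 b2 b3 x1 x2 x3 ->
  is_rotation (fun t => b3 / g * x1 t) x2 (fun t => x3 t / g).
Proof.
intros sol t; destruct (sol t) as [_ [h2 h3]].
assert (hg := gamma_pos).
split.
- replace (- (b3 / g * x1 t) * (x3 t / g)) with (b2 * x1 t * x3 t); [exact h2|].
  rewrite b2_gamma; field; lra.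
- derive_solve; field; lra.
Qed.

Lemma on_level_unit_circle (x2 x3 : R -> R) :
  on_level b2 b3 H x2 x3 -> forall t, (x2 t / s) ^ 2 + (x3 t / g / s) ^ 2 = 1.
Proof.
intros lev t.
assert (hg := gamma_pos); assert (hs := sqrt_2H_pos).
transitivity ((x2 t ^ 2 - b2 / b3 * x3 t ^ 2) / (s * s)).
- assert (hb3 := b3_neq0).
  rewrite b2_gamma; field; repeat split; (assumption || lra).
- rewrite lev, sqrt_2H_sq; field; lra.
Qed.

Lemma solution_pendulum_form (x1 x2 x3 : R -> R) :
  is_solution b1 b2 b3 x1 x2 x3 -> on_level b2 b3 H x2 x3 ->
  exists theta dtheta : R -> R,
    is_pendulum_solution b1 b2 b3 H theta dtheta /\
    forall t,
      x1 t = g / b3 * dtheta t /\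
      x2 t = s * cos (theta t) /\
      x3 t = g * s * sin (theta t).
Proof.
intros sol lev.
assert (hg := gamma_pos); assert (hs := sqrt_2H_pos).
assert (hb3 := b3_neq0).
set (w := fun t => b3 / g * x1 t).
assert (hw : forall t, is_derive w t (b3 / g * (b1 * x2 t))).
{ intro t; apply is_derive_scal, sol. }
destruct (cos_sin_surjective _ _ (on_level_unit_circle x2 x3 lev 0)) as [p [hcos hsin]].
set (theta := fun t => p + RInt w 0 t).
assert (htheta : forall t, is_derive theta t (w t)).
{ apply is_derive_primitive; intro t; apply (ex_derive_continuous w); eexists; apply hw. }
assert (hpolar := is_rotation_unique _ _ _ _ _ (is_solution_rotation x1 x2 x3 sol)
  (is_rotation_polar w theta s htheta)).
assert (hx : forall t, x2 t = s * cos (theta t) /\ x3 t / g = s * sin (theta t)).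
{ apply hpolar; unfold theta; rewrite RInt_point; change (zero : R) with 0;
    rewrite Rplus_0_r; [rewrite hcos | rewrite hsin]; field; lra. }
exists theta, w; split.
- intro t; split; [apply htheta|].
  change (gamma b2 b3) with g; change (sqrt (2 * H)) with s.
  replace (b1 * b3 / g * s * cos (theta t)) with (b3 / g * (b1 * x2 t)); [apply hw|].
  rewrite (proj1 (hx t)); field; lra.
- intro t; destruct (hx t) as [hx2 hx3]; unfold w; repeat split.
  + field; split; lra.
  + exact hx2.
  + rewrite Rmult_assoc, <- hx3; field; lra.
Qed.

Lemma pendulum_is_solution (theta dtheta : R -> R) :
  is_pendulum_solution b1 b2 b3 H theta dtheta ->
  is_solution b1 b2 b3 (fun t => g / b3 * dtheta t)
    (fun t => s * cos (theta t)) (fun t => g * s * sin (theta t)).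
Proof.
intros pend t; destruct (pend t) as [h1 h2].
assert (hg := gamma_pos).
assert (hb3 := b3_neq0).
split; [|split]; derive_solve; change (gamma b2 b3) with g; change (sqrt (2 * H)) with s.
- field; split; lra.
- rewrite b2_gamma; field; split; lra.
- field; lra.
Qed.

Lemma polar_on_level (theta : R -> R) :
  on_level b2 b3 H (fun t => s * cos (theta t)) (fun t => g * s * sin (theta t)).
Proof.
intro t.
assert (hg := gamma_pos).
assert (hb3 := b3_neq0).
assert (hsc := sin2_cos2 (theta t)); unfold Rsqr in hsc.
rewrite <- sqrt_2H_sq, b2_gamma.
transitivity (s * s * (sin (theta t) * sin (theta t) + cos (theta t) * cos (theta t))).
- field; split; lra.
- rewrite hsc; ring.
Qed.

End LevelSurface.

Theorem proposition2p2 (b1 b2 b3 H : R)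
  (hb : b1 * b2 * b3 <> 0) (hb23 : b2 * b3 < 0) (hH : 0 < H) :
  (forall x1 x2 x3 : R -> R,
     is_solution b1 b2 b3 x1 x2 x3 ->
     on_level b2 b3 H x2 x3 ->
     exists theta dtheta : R -> R,
       is_pendulum_solution b1 b2 b3 H theta dtheta /\
       forall t : R,
         x1 t = gamma b2 b3 / b3 * dtheta t /\
         x2 t = sqrt (2 * H) * cos (theta t) /\
         x3 t = gamma b2 b3 * sqrt (2 * H) * sin (theta t)) /\
  (forall theta dtheta : R -> R,
     is_pendulum_solution b1 b2 b3 H theta dtheta ->
     let x1 := fun t => gamma b2 b3 / b3 * dtheta t in
     let x2 := fun t => sqrt (2 * H) * cos (theta t) in
     let x3 := fun t => gamma b2 b3 * sqrt (2 * H) * sin (theta t) in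
     is_solution b1 b2 b3 x1 x2 x3 /\ on_level b2 b3 H x2 x3).
Proof.
split.
- intros x1 x2 x3 sol lev; now apply solution_pendulum_form.
- intros theta dtheta pend; split.
  + now apply pendulum_is_solution.
  + now apply polar_on_level.
Qed.
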